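(* Let $\varrho:\mathcal{Z}\to\mathbb{R}\cup\{+\infty\}$ be a coherent risk measure with preference to small outcomes that satisfies property T: $\varrho[X+\alpha e^i]=\varrho[X]+\alpha$ for all $X\in\mathcal{Z}$, $\alpha\in\mathbb{R}$, $i=1,\dots,m$. Then $\varrho$ is linear on constant vectors, i.e. the map $\mathbb{R}^m\ni a\mapsto\varrho[a]$ (with $a$ viewed as a constant random vector) is linear.
   Context: $(\Omega,\mathcal{F},P)$ is a probability space, $m\ge1$, $p\in[1,\infty)$, $\mathcal{Z}=\mathcal{L}_p(\Omega,\mathcal{F},P;\mathbb{R}^m)$ with norm topology. $e^i\in\mathbb{R}^m$ is the $i$-th unit vector and $\mathbb{I}$ the constant random vector with all components $1$. A coherent risk measure with preference to small outcomes is a lower semicontinuous functional $\varrho:\mathcal{Z}\to\mathbb{R}\cup\{+\infty\}$ with nonempty domain satisfying: (A1) convexity; (A2) $X_i\ge Y_i$ a.s. for all $i$ implies $\varrho[X]\ge\varrho[Y]$; (A3) $\varrho[tX]=t\varrho[X]$ for $t>0$; (A4) $\varrho[X+a\mathbb{I}]=\varrho[X]+a\varrho[\mathbb{I}]$ for all $X\in\mathcal{Z}$, $a\in\mathbb{R}$. *)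

From HB Require Import structures.
From mathcomp Require Import all_boot all_order all_algebra.
From mathcomp Require Import all_classical all_reals all_analysis.
Set Implicit Arguments. Unset Strict Implicit. Unset Printing Implicit Defensive.
Import Order.TTheory GRing.Theory Num.Theory.
Import numFieldNormedType.Exports.
Local Open Scope classical_set_scope.
Local Open Scope ring_scope.

Section Zspace.
Context {d : measure_display} {T : measurableType d} {R : realType}.
Variables (P : probability T R) (p : R) (m : nat).

Definition inZ (X : T -> 'rV[R]_m) : Prop :=
  forall i : 'I_m,
    measurable_fun setT (fun w => X w ord0 i) /\
    (Lnorm P p%:E (fun w => (X w ord0 i)%:E) < +oo)%E.

(* L_p distance (with the sup-norm on R^m; all norms on R^m are equivalent) *)
Definition Zdist (X Y : T -> 'rV[R]_m) : \bar R :=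
  Lnorm P p%:E (fun w => (`|X w - Y w|)%:E).

Definition cstZ (a : 'rV[R]_m) : T -> 'rV[R]_m := fun _ => a.

Definition evec (i : 'I_m) : 'rV[R]_m := delta_mx ord0 i.
Definition onesv : 'rV[R]_m := const_mx 1.

Local Open Scope ereal_scope.

Definition coherent_risk_measure (rho : (T -> 'rV[R]_m) -> \bar R) : Prop :=
  (forall X, inZ X -> rho X != -oo) /\
  (exists X, inZ X /\ rho X < +oo) /\
  (forall X (Xs : nat -> T -> 'rV[R]_m), inZ X -> (forall n, inZ (Xs n)) ->
     (fun n => Zdist (Xs n) X) @ \oo --> 0 ->
     rho X <= limn_einf (fun n => rho (Xs n))) /\
  (forall X Y (l : R), inZ X -> inZ Y -> (0 <= l <= 1)%R ->
     rho (fun w => (l *: X w + (1 - l) *: Y w)%R) <=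
     l%:E * rho X + (1 - l)%R%:E * rho Y) /\
  (forall X Y, inZ X -> inZ Y ->
     {ae P, forall w, forall i, (Y w ord0 i <= X w ord0 i)%R} ->
     rho Y <= rho X) /\
  (forall X (t : R), inZ X -> (0 < t)%R -> rho (fun w => (t *: X w)%R) = t%:E * rho X) /\
  (forall X (a : R), inZ X ->
     rho (fun w => (X w + a *: onesv)%R) = rho X + a%:E * rho (cstZ onesv)).

Definition property_T (rho : (T -> 'rV[R]_m) -> \bar R) : Prop :=
  forall X (alpha : R) (i : 'I_m), inZ X ->
    rho (fun w => (X w + alpha *: evec i)%R) = rho X + alpha%:E.

End Zspace.

(* Write a = \sum_i a_i e^i.  Adding the coordinates one at a time with
   property T gives rho[a] = rho[0] + \sum_i a_i, so it suffices to show
   rho[0] = 0.  Positive homogeneity gives rho[0] = 2 rho[0], hence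
   rho[0] is 0 or +oo.  Take X with rho[X] finite: X/(n+1) -> 0 in L_p and
   rho[X/(n+1)] = rho[X]/(n+1) -> 0, so lower semicontinuity yields
   rho[0] <= 0.  The convergence X/(n+1) -> 0 needs the sup-norm of X to be
   p-integrable, which follows from |v|^p <= \sum_i |v_i|^p. *)

From HB Require Import structures.
From mathcomp Require Import all_boot all_order all_algebra.
From mathcomp Require Import all_classical all_reals all_analysis.
From mathcomp Require Import measurable_realfun.
From mathcomp Require Import lra.
Import Order.TTheory GRing.Theory Num.Theory.
Import numFieldNormedType.Exports.
Local Open Scope ring_scope.

Section Lnorm_scale.
Context {d} {T : measurableType d} {R : realType}.
Variable mu : {measure set T -> \bar R}.

Lemma LnormZ_EFin (p : R) (f : T -> R) (c : R) : 0 < p ->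
  measurable_fun setT f ->
  Lnorm mu p%:E (fun w => (c * f w)%:E) =
  (`|c|%:E * Lnorm mu p%:E (fun w => (f w)%:E))%E.
Proof.
move=> p0 mf; rewrite unlock /=.
under eq_integral do rewrite /= normrM powRM // EFinM.
rewrite ge0_integralZl_EFin ?powR_ge0 //; last first.
  exact/measurable_EFinP/(measurableT_comp (measurable_powR _))/measurableT_comp.
rewrite poweRM ?lee_fin ?powR_ge0 //; last first.
  by apply: integral_ge0 => x _; rewrite lee_fin powR_ge0.
by rewrite poweR_EFin -powRrM mulfV ?gt_eqF // powRr1.
Qed.

End Lnorm_scale.

Lemma rV_normr_powR_le_sum (R : realType) (m : nat) (v : 'rV[R]_m) (p : R) :
  0 < p -> `|v| `^ p <= \sum_i `|v ord0 i| `^ p.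
Proof.
move=> p0; rewrite [`|v|]mx_normrE.
set S := \sum_i _; set M := \big[_/_]_ij _.
suff [] : 0 <= M /\ M `^ p <= S by [].
apply: (big_ind (fun x => 0 <= x /\ x `^ p <= S)).
- by rewrite powR0 ?gt_eqF //; split=> //; apply: sumr_ge0 => i _; exact: powR_ge0.
- by move=> x y [x0 hx] [y0 hy]; rewrite /Order.max; case: ifP.
- move=> [i j] _ /=; rewrite (ord1 i); split=> //.
  by rewrite /S (bigD1 j) //= lerDl; apply: sumr_ge0 => k _; exact: powR_ge0.
Qed.

Section measurable_mx_norm.
Context {d} {T : measurableType d} {R : realType}.

Lemma measurable_bigmaxr (I : Type) (s : seq I) (F : I -> T -> R) :
  (forall i, measurable_fun setT (F i)) ->
  measurable_fun setT (fun w => \big[Num.max/0]_(i <- s) F i w).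
Proof.
move=> mF; elim: s => [|i s ih].
  by under eq_fun do rewrite big_nil; exact: measurable_cst.
by under eq_fun do rewrite big_cons; exact: measurable_maxr.
Qed.

Lemma measurable_mx_norm (k n : nat) (X : T -> 'M[R]_(k, n)) :
  (forall i j, measurable_fun setT (fun w => X w i j)) ->
  measurable_fun setT (fun w => `|X w|).
Proof.
move=> mX; under eq_fun do rewrite [`|_|]mx_normrE.
by apply: measurable_bigmaxr => -[i j]; exact: measurableT_comp.
Qed.

End measurable_mx_norm.

Lemma cvg_harmonicMr_EFin {R : realType} (k : R) :
  ((fun n => (harmonic n * k)%:E) @ \oo --> (0 : \bar R))%classic.
Proof.
have -> : (0 : \bar R) = (0 * k)%:E by rewrite mul0r.
apply: cvg_EFin; first exact: nearW.
by rewrite /comp /=; apply: cvgMl; exact: cvg_harmonic.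
Qed.

Section Zspace.
Context {d} {T : measurableType d} {R : realType}.
Variables (P : probability T R) (p : R) (m : nat).
Hypothesis p_gt0 : 0 < p.

Lemma inZ_cst (a : 'rV[R]_m) : inZ P p (cstZ a).
Proof.
move=> i; split; first exact: measurable_cst.
rewrite unlock /=; apply: poweR_lty.
rewrite (_ : (fun _ => _) = cst ((`|a ord0 i| `^ p)%:E)) //.
rewrite integral_cst // lte_mul_pinfty ?lee_fin ?powR_ge0 //.
by rewrite ltey_eq fin_num_measure.
Qed.

Lemma inZ_scale (c : R) (X : T -> 'rV[R]_m) :
  inZ P p X -> inZ P p (fun w => c *: X w).
Proof.
move=> XZ i; have [mXi XiN] := XZ i; split.
  by under eq_fun do rewrite mxE; exact: measurable_funM.
under eq_Lnorm do rewrite mxE.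
by rewrite LnormZ_EFin // lte_mul_pinfty.
Qed.

Lemma Lnorm_rv_normr_lty (X : T -> 'rV[R]_m) : inZ P p X ->
  (Lnorm P p%:E (fun w => `|X w|%:E) < +oo)%E.
Proof.
move=> XZ; have mXi i : measurable_fun setT (fun w => `|X w ord0 i| `^ p).
  exact/(measurableT_comp (measurable_powR _))/measurableT_comp/(XZ i).1.
rewrite unlock /=; apply: poweR_lty.
apply: (@le_lt_trans _ _ (\int[P]_w (\sum_i `|X w ord0 i| `^ p)%:E)%E).
  apply: ge0_le_integral => //.
  - apply/measurable_EFinP; under eq_fun do rewrite normr_id.
    apply/(measurableT_comp (measurable_powR _))/measurable_mx_norm => i j.
    by rewrite (ord1 i); exact: (XZ j).1.
  - exact/measurable_EFinP/measurable_sum.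
  - by move=> w _; rewrite lee_fin normr_id rV_normr_powR_le_sum.
under eq_integral do rewrite -sumEFin.
rewrite ge0_integral_sum //; last by move=> i; exact/measurable_EFinP.
apply: lte_sum_pinfty => i _.
have /= <- := poweR_Lnorm P (fun w => (X w ord0 i)%:E) (lt0r_neq0 p_gt0).
exact/poweR_lty/(XZ i).2.
Qed.

Lemma Zdist_scale_cst0 (c : R) (X : T -> 'rV[R]_m) : inZ P p X ->
  Zdist P p (fun w => c *: X w) (cstZ 0) =
  (`|c|%:E * Lnorm P p%:E (fun w => `|X w|%:E))%E.
Proof.
move=> XZ; have mX : measurable_fun setT (fun w => `|X w|).
  by apply: measurable_mx_norm => i j; rewrite (ord1 i); exact: (XZ j).1.
rewrite /Zdist -[`|c|]normr_id -(LnormZ_EFin P p _ `|c| p_gt0 mX).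
by apply: eq_Lnorm => w /=; rewrite /cstZ subr0 normrZ.
Qed.

Variable rho : (T -> 'rV[R]_m) -> \bar R.
Hypothesis rho_crm : coherent_risk_measure P p rho.

Lemma rho_cst0_le0 : (rho (cstZ 0) <= 0)%E.
Proof.
have [rhoNy [[X [XZ rhoX]] [lsc [_ [_ [hom _]]]]]] := rho_crm.
have [r rhoXE] : exists r, rho X = r%:E.
  by move: (rhoNy _ XZ) rhoX; case: (rho X) => // r _ _; exists r.
have [l lE] : exists l, Lnorm P p%:E (fun w => `|X w|%:E) = l%:E.
  move: (Lnorm_ge0 P p%:E (fun w => `|X w|%:E)) (Lnorm_rv_normr_lty _ XZ).
  by case: (Lnorm _ _ _) => // l _ _; exists l.
pose Xs n w := harmonic n *: X w.
have XsZ n : inZ P p (Xs n) by exact: inZ_scale.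
have := lsc (cstZ 0) Xs (inZ_cst 0) XsZ.
have -> : (fun n => Zdist P p (Xs n) (cstZ 0)) = (fun n => (harmonic n * l)%:E).
  apply: funext => n; rewrite Zdist_scale_cst0 // lE -EFinM.
  by rewrite gtr0_norm ?harmonic_gt0.
have -> : (fun n => rho (Xs n)) = (fun n => (harmonic n * r)%:E).
  by apply: funext => n; rewrite hom ?harmonic_gt0 // rhoXE.
move=> /(_ (cvg_harmonicMr_EFin l)).
rewrite is_cvg_limn_einfE; first by rewrite (cvg_lim _ (cvg_harmonicMr_EFin r)).
by apply/cvg_ex; exists 0%E; exact: cvg_harmonicMr_EFin.
Qed.

Lemma rho_cst0 : rho (cstZ 0) = 0%E.
Proof.
have [rhoNy [_ [_ [_ [_ [hom _]]]]]] := rho_crm.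
have rho0_twice : rho (cstZ 0) = (2%:E * rho (cstZ 0))%E.
  rewrite -hom //; last exact: inZ_cst.
  by congr rho; apply: funext => w; rewrite /cstZ scaler0.
move: (rhoNy _ (inZ_cst 0)) rho_cst0_le0 rho0_twice.
case: (rho (cstZ 0)) => // x _ x_le0 /eqP; rewrite -EFinM eqe => /eqP x2.
by congr (_%:E); lra.
Qed.

Hypothesis rho_T : property_T P p rho.

Lemma rho_cst_sum (a : 'rV[R]_m) : rho (cstZ a) = (\sum_i a ord0 i)%:E.
Proof.
rewrite [in LHS](row_sum_delta a).
elim/big_rec2: _ => [|i x v _ IHv]; first exact: rho_cst0.
have -> : cstZ (a ord0 i *: delta_mx ord0 i + v) =
    (fun w => cstZ v w + a ord0 i *: evec i) :> (T -> 'rV[R]_m).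
  by apply: funext => w; rewrite /cstZ /evec addrC.
rewrite rho_T; last exact: inZ_cst.
by rewrite IHv -EFinD addrC.
Qed.

End Zspace.

Theorem corollary3 (d : measure_display) (T : measurableType d) (R : realType)
  (P : probability T R) (p : R) (m : nat) (hp : 1 <= p) (hm : (1 <= m)%N)
  (rho : (T -> 'rV[R]_m) -> \bar R) :
  coherent_risk_measure P p rho -> property_T P p rho ->
  exists f : 'rV[R]_m -> R,
    (forall (t : R) (a b : 'rV[R]_m), f (t *: a + b) = t * f a + f b) /\
    (forall a : 'rV[R]_m, rho (cstZ a) = (f a)%:E).
Proof.
move=> rho_crm rho_T; have p_gt0 : 0 < p by exact: lt_le_trans hp.
have rho_cst := rho_cst_sum _ _ _ p_gt0 _ rho_crm rho_T.
exists (fun a => \sum_i a ord0 i); split; last exact: rho_cst.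
by move=> t a b; rewrite mulr_sumr -big_split; apply: eq_bigr => i _; rewrite !mxE.
Qed.
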